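(* Let $s\ge 3$ and $1\le i\le s-1$, and put $J=\lfloor (s-i+1)/2\rfloor$. Then for all $0\le j\le J$ we have $|\lambda_{i,j}|\le|\lambda_{i,J}|$, with equality if and only if either $j=J$, or $s$ is odd, $i=1$ and $j=0$.
   Context: $|\mu|$ denotes the size (sum of parts) of a partition $\mu$. For a finite set $\{h_1>h_2>\cdots>h_m\}$ of positive integers, the unique partition with this $\beta$-set (set of first-column hook lengths) is $(h_1-(m-1),h_2-(m-2),\ldots,h_m)$, of size $\sum_i h_i-\binom{m}{2}$. For $s\ge 3$, $1\le i\le s-1$, define $\beta_{i,0}=\bigcup_{k\ge 0}\{i+1+k(s+2),\ldots,(k+1)s-1\}$ (empty intervals omitted), and for $1\le j\le\lfloor(s-i+1)/2\rfloor$ define $\beta_{i,j}=\beta_{i,0}\cup\{i+p(s+2): 0\le p\le j-1\}$. Let $\lambda_{i,j}$ be the unique partition whose $\beta$-set is $\beta_{i,j}$. *)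

From mathcomp Require Import all_boot.
Set Implicit Arguments. Unset Strict Implicit. Unset Printing Implicit Defensive.

(* The partition whose beta-set (set of first-column hook lengths) is the
   finite set of positive integers b: with b = {h_1 > ... > h_m},
   the partition is (h_1-(m-1), h_2-(m-2), ..., h_m). *)
Definition partition_of_beta (b : seq nat) : seq nat :=
  let h := sort geq (undup b) in
  [seq nth 0 h l - (size h - 1 - l) | l <- iota 0 (size h)].

Definition psize (mu : seq nat) : nat := sumn mu.

(* The interval for k is nonempty only when i+2+2k <= s, so k < s
   suffices; for k >= s the intervals are empty. *)
Definition beta0 (s i : nat) : seq nat :=
  flatten [seq iota (i + 1 + k * (s + 2)) ((k + 1) * s - (i + 1 + k * (s + 2)))
          | k <- iota 0 s].

Definition beta (s i j : nat) : seq nat :=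
  undup (beta0 s i ++ [seq i + p * (s + 2) | p <- iota 0 j]).

Definition lambda (s i j : nat) : seq nat := partition_of_beta (beta s i j).

From mathcomp Require Import all_boot zify.

(* Since |lambda| = sum(beta) - C(|beta|, 2) and beta_{i,j+1} only adds the
   hook length i + j(s+2) to beta_{i,j}, the increments are
   |lambda_{i,j+1}| - |lambda_{i,j}| = i + j(s+1) - |beta_{i,0}|, where
   |beta_{i,0}| = ceil(t/2) (floor(t/2) + 1) for t = s-i-1.  Summing them from
   j up to J = floor(t/2) + 1 gives
   2(|lambda_{i,J}| - |lambda_{i,j}|) = (J - j)((i - r)(J + 1) + (s + 1) j)
   with r = t mod 2; this is nonnegative, and zero only if j = J or
   j = 0 and i = r = 1, i.e. i = 1 and s odd. *)


Lemma size_tail_lt_head (x : nat) h :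
  sorted geq (x :: h) -> uniq (x :: h) -> all (leq 1) (x :: h) -> size h < x.
Proof.
move=> /= sorted_xh /andP[xNh uniq_h] /andP[x_gt0 h_gt0].
have le_hx : all (geq x) h.
  by apply: order_path_min sorted_xh => b a c ba cb; exact: leq_trans cb ba.
have sub_h : {subset h <= iota 1 x.-1}.
  move=> y yh; rewrite mem_iota.
  have le_yx : y <= x := allP le_hx y yh.
  have y_gt0 : 0 < y := allP h_gt0 y yh.
  have : y != x by apply: contraNneq xNh => <-.
  lia.
by rewrite -(prednK x_gt0) ltnS -(size_iota 1 x.-1) uniq_leq_size.
Qed.

Lemma sumn_parts_of_beta h : sorted geq h -> uniq h -> all (leq 1) h ->
  sumn [seq nth 0 h l - (size h - 1 - l) | l <- iota 0 (size h)] + 'C(size h, 2)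
  = sumn h.
Proof.
elim: h => [|x h IH] //= sorted_xh uniq_xh pos_xh.
have lt_hx : size h < x by exact: size_tail_lt_head.
move: sorted_xh uniq_xh pos_xh => /path_sorted sorted_h /andP[_ uniq_h] /andP[_ pos_h].
rewrite (iotaDl 1 0) -map_comp (eq_map (g := fun l => nth 0 h l - (size h - 1 - l))).
  by rewrite binS bin1 -IH //; lia.
by move=> l /=; rewrite add0n subn1 subnDA.
Qed.

Lemma psize_partition_of_beta b : uniq b -> all (leq 1) b ->
  psize (partition_of_beta b) + 'C(size b, 2) = sumn b.
Proof.
move=> uniq_b pos_b; rewrite /psize /partition_of_beta undup_id //.
have perm_b : perm_eq (sort geq b) b by rewrite perm_sort.
rewrite -(perm_size perm_b) -(perm_sumn perm_b) sumn_parts_of_beta //.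
- exact: (sort_sorted (fun x y => leq_total y x)).
- by rewrite sort_uniq.
- by rewrite all_sort.
Qed.

Section ConcatIntervals.

Variables (a len : nat -> nat).
Hypothesis intervals_sep : forall k, a k + len k <= a k.+1.

Let intervals n := flatten [seq iota (a k) (len k) | k <- iota 0 n].

Lemma mem_intervals_lt n x : x \in intervals n -> x < a n.
Proof.
elim: n x => [|n IH] x //.
rewrite /intervals -addn1 iotaD map_cat flatten_cat mem_cat /= cats0 mem_iota add0n addn1.
by case/orP => [/IH|]; have := intervals_sep n; lia.
Qed.

Lemma intervals_uniq n : uniq (intervals n).
Proof.
elim: n => [|n IH] //.
rewrite /intervals -addn1 iotaD map_cat flatten_cat cat_uniq /= cats0 iota_uniq IH andbT add0n.
apply/hasPn => x; rewrite mem_iota => /andP[le_ax _].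
by apply/negP => /mem_intervals_lt; lia.
Qed.

End ConcatIntervals.

Lemma sumn_sub_double t n : t <= n.*2 ->
  sumn [seq t - k.*2 | k <- iota 0 n] = uphalf t * (half t).+1.
Proof.
elim: n t => [|n IH] t le_t2n; first by rewrite leqn0 in le_t2n; rewrite (eqP le_t2n).
rewrite /= (iotaDl 1 0) -map_comp (eq_map (g := fun k => (t - 2) - k.*2)); last first.
  by move=> k /=; rewrite -!mul2n; lia.
rewrite IH; last by move: le_t2n; rewrite doubleS -!mul2n; lia.
case: t {le_t2n} => [|[|t]] //=.
rewrite double0 !subSS !subn0 !uphalf_half.
by have := odd_double_half t; rewrite -mul2n; lia.
Qed.

Lemma beta0_uniq s i : uniq (beta0 s i).
Proof.
apply: (@intervals_uniq (fun k => i + 1 + k * (s + 2))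
                        (fun k => (k + 1) * s - (i + 1 + k * (s + 2)))) => k.
lia.
Qed.

Lemma size_beta0 s i : size (beta0 s i) = uphalf (s - i - 1) * (half (s - i - 1)).+1.
Proof.
rewrite size_flatten /shape -map_comp (eq_map (g := fun k => (s - i - 1) - k.*2)).
  by rewrite sumn_sub_double // -mul2n; lia.
by move=> k /=; rewrite size_iota -mul2n; lia.
Qed.

Lemma notin_beta0 s i p : i + p * (s + 2) \notin beta0 s i.
Proof.
apply/negP => /flattenP[_ /mapP[k _ ->]]; rewrite mem_iota.
have [lt_kp | le_pk] := ltnP k p.
  have : k.+1 * s <= p * s by rewrite leq_mul2r lt_kp orbT.
  lia.
have : p * (s + 2) <= k * (s + 2) by rewrite leq_mul2r le_pk orbT.
lia.
Qed.

Lemma betaS s i j : beta s i j.+1 = rcons (beta s i j) (i + j * (s + 2)).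
Proof.
rewrite /beta -[j.+1]addn1 iotaD map_cat /= cats1 -rcons_cat undup_rcons.
congr rcons; apply/all_filterP/allP => y; rewrite mem_undup mem_cat.
case/orP => [y_beta0|/mapP[p]].
  by apply: contraTneq y_beta0 => ->; apply: notin_beta0.
rewrite mem_iota add0n => /andP[_ lt_pj] ->.
by rewrite eqn_add2l eqn_mul2r addn2 /= ltn_eqF.
Qed.

Lemma size_beta s i j : size (beta s i j) = size (beta0 s i) + j.
Proof.
elim: j => [|j IH]; first by rewrite /beta cats0 undup_id ?beta0_uniq ?addn0.
by rewrite betaS size_rcons IH addnS.
Qed.

Lemma beta_pos s i j : 0 < i -> all (leq 1) (beta s i j).
Proof.
move=> i_gt0; apply/allP => x; rewrite mem_undup mem_cat.
case/orP => [/flattenP[_ /mapP[k _ ->]]|/mapP[p _ ->]]; rewrite ?mem_iota; lia.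
Qed.

Lemma psize_lambdaS s i j : 0 < i ->
  psize (lambda s i j.+1) + size (beta0 s i) = psize (lambda s i j) + i + j * (s + 1).
Proof.
move=> i_gt0.
have psize_lambda j' :=
  psize_partition_of_beta (beta s i j') (undup_uniq _) (beta_pos s i j' i_gt0).
have := psize_lambda j.+1; have := psize_lambda j.
rewrite /lambda betaS size_rcons sumn_rcons binS bin1 size_beta.
lia.
Qed.

Lemma psize_lambdaD s i j e : 0 < i ->
  psize (lambda s i (j + e)) + e * size (beta0 s i)
  = psize (lambda s i j) + e * i + (s + 1) * (e * j + 'C(e, 2)).
Proof.
move=> i_gt0; elim: e => [|e IH]; first by rewrite addn0 !mul0n muln0 !addn0.
have := psize_lambdaS s i (j + e) i_gt0.
rewrite -addnS binS bin1; lia.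
Qed.

Lemma double_bin2 n : 'C(n, 2).*2 = n * n.-1.
Proof. by elim: n => [|[|n] IH] //; rewrite binS bin1 doubleD IH -!mul2n /=; lia. Qed.

Lemma psize_lambda_top_gap s i j q (r : bool) :
  0 < i -> s = i + 1 + r + q.*2 -> j <= q.+1 ->
  2 * psize (lambda s i q.+1)
  = 2 * psize (lambda s i j) + (q.+1 - j) * ((i - r) * q.+2 + (s + 1) * j).
Proof.
move=> i_gt0 -> {s}; rewrite leq_eqVlt => /orP[/eqP ->|]; first by rewrite subnn mul0n addn0.
rewrite ltnS => /subnKC <-; set e := q - j.
have := psize_lambdaD (i + 1 + r + (j + e).*2) i j e.+1 i_gt0.
rewrite size_beta0 -addnS addKn.
have -> : i + 1 + r + (j + e).*2 - i - 1 = r + (j + e).*2 by lia.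
rewrite uphalf_half oddD odd_double addbF oddb half_bit_double.
have := double_bin2 e.+1; rewrite -!mul2n.
by case: r => /=; case: i i_gt0 => // i _; rewrite ?subSS subn0; lia.
Qed.

Theorem lemma3p3 (s i j : nat) :
  3 <= s -> 1 <= i <= s - 1 -> j <= (s - i + 1) %/ 2 ->
  psize (lambda s i j) <= psize (lambda s i ((s - i + 1) %/ 2)) /\
  (psize (lambda s i j) = psize (lambda s i ((s - i + 1) %/ 2)) <->
     j = (s - i + 1) %/ 2 \/ (odd s /\ i = 1 /\ j = 0)).
Proof.
move=> _ /andP[i_gt0 lt_is] le_jJ.
set q := (s - i - 1)./2; set r := odd (s - i - 1).
have s_eq : s = i + 1 + r + q.*2.
  by have := odd_double_half (s - i - 1); rewrite -/q -/r -!mul2n; lia.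
have J_eq : (s - i + 1) %/ 2 = q.+1.
  by rewrite divn2 (_ : s - i + 1 = (s - i - 1).+2) //; lia.
rewrite J_eq in le_jJ *.
have r_odd : i = 1 -> r = odd s.
  by move=> i1; rewrite /r i1 -subnDA oddB ?addbF //; lia.
have := psize_lambda_top_gap s i j q r i_gt0 s_eq le_jJ.
set gap := (q.+1 - j) * _ => double_psize_J.
split; first lia.
split => [eq_psize | [-> // | [odd_s [i1 j0]]]].
- have /eqP : gap = 0 by lia.
  rewrite muln_eq0 subn_eq0 addn_eq0 !muln_eq0 addn1 /= orbF.
  case/orP => [le_Jj | /andP[le_ir /eqP j0]]; first by left; lia.
  have [i1 r_true] : i = 1 /\ r by move: le_ir; case: (r); lia.
  by right; rewrite -r_odd // r_true.
- suff : gap = 0 by lia.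
  by rewrite /gap i1 r_odd // odd_s j0 /= !muln0.
Qed.
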